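(* Let $\mathcal{C}$ be an $[n,k]_q$ MWS code such that for every $c\in\mathcal{C}\setminus\{0\}$ the entries of $V(c)$ are pairwise distinct. Then for each $i\in\{1,\dots,q-1\}$ there exists a non-zero $r=(r_1,\dots,r_{q-1})\in\mathbb{N}^{q-1}$ such that $$\sum_{j=1}^{q-1} r_j\left(a[\alpha^{i-j}]-b[\alpha^{i-j}]\right)\neq 0\quad\text{for all } a,b\in\mathcal{C},\ a\ne b.$$
   Context: $\alpha$ is a fixed primitive element of $\mathbb{F}_q$ (exponents modulo $q-1$), $\mathbb{N}=\{0,1,2,\dots\}$. An $[n,k]_q$ code is a $k$-dimensional subspace of $\mathbb{F}_q^n$ (non-degenerate if $k\ge2$); it is MWS if it has exactly $\frac{q^k-1}{q-1}$ distinct non-zero Hamming weights. For $c\in\mathbb{F}_q^n$, $\beta\in\mathbb{F}_q$, $c[\beta]=|\{l:c_l=\beta\}|$ and $V(c)=(c[\alpha],\dots,c[\alpha^{q-1}],c[0])$. *)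

From HB Require Import structures.
From mathcomp Require Import all_boot all_order all_algebra.
Set Implicit Arguments. Unset Strict Implicit. Unset Printing Implicit Defensive.
Import GRing.Theory.
Local Open Scope ring_scope.

Section Defs.
Variable F : finFieldType.
Variable n : nat.

Definition wt (c : 'rV[F]_n) : nat := #|[set l : 'I_n | c 0 l != 0]|.

Definition cnt (c : 'rV[F]_n) (beta : F) : nat := #|[set l : 'I_n | c 0 l == beta]|.

(* V(c) = (c[alpha], ..., c[alpha^(q-1)], c[0]), indexed by 'I_q, q = #|F| *)
Definition Vvec (alpha : F) (c : 'rV[F]_n) : 'I_#|F| -> nat :=
  fun j => if (val j < #|F|.-1)%N then cnt c (alpha ^+ (val j).+1) else cnt c 0.

Definition is_code (k : nat) (C : {vspace 'rV[F]_n}) : Prop :=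
  \dim C = k /\
  ((2 <= k)%N -> forall l : 'I_n, exists2 c, c \in C & c 0 l != 0).

Definition MWS (k : nat) (C : {vspace 'rV[F]_n}) : Prop :=
  size (undup [seq wt c | c <- enum [pred c : 'rV[F]_n | (c \in C) && (c != 0)]]) =
    ((#|F| ^ k - 1) %/ (#|F| - 1))%N.
End Defs.

From HB Require Import structures.
From mathcomp Require Import all_boot all_order all_algebra finfield.
Import GRing.Theory.
Local Open Scope ring_scope.
Set Implicit Arguments. Unset Strict Implicit.

(* Take r_j = (n+1)^j.  Every count is at most n, so the weighted sum is the
   difference of two base-(n+1) expansions and vanishes only if a and b have the
   same count at every alpha^(i-j-1), i.e. at every nonzero field element.  Then
   wt a = wt b.  In an MWS code each of the (q^k-1)/(q-1) weight classes contains
   a punctured line {x c | x <> 0} of q-1 codewords, and together they hold the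
   q^k-1 nonzero codewords, so each weight class is a single line: b = x a.
   Finally a[alpha] = b[alpha] = a[alpha/x], and the distinct entries of V(a)
   force x = 1. *)

Lemma sum_eq_size_mul_min (I : eqType) (r : seq I) (E : I -> nat) (m : nat) :
  {in r, forall i, m <= E i}%N -> (\sum_(i <- r) E i = size r * m)%N ->
  {in r, forall i, E i = m}.
Proof.
move=> le_mE sumE i ri; apply/eqP; rewrite eqn_leq le_mE // andbT -subn_eq0.
have: (\sum_(j <- r) (E j - m) == 0)%N.
  rewrite -(eqn_add2l (size r * m)) addn0 -{2}sumE -sum1_size big_distrl -big_split /=.
  rewrite big_seq [X in _ == X]big_seq; apply/eqP/eq_bigr => j rj.
  by rewrite mul1n subnKC ?le_mE.
by rewrite sum_nat_seq_eq0 => /allP/(_ i ri).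
Qed.

Lemma sum_expn_digits_inj (B m : nat) (x y : nat -> nat) :
  (forall j, j < m -> x j < B)%N -> (forall j, j < m -> y j < B)%N ->
  (\sum_(j < m) B ^ j * x j = \sum_(j < m) B ^ j * y j)%N ->
  forall j, (j < m)%N -> x j = y j.
Proof.
elim: m x y => [|m IHm] x y ltxB ltyB + j // lt_jm.
have shift (z : nat -> nat) :
    (\sum_(j < m.+1) B ^ j * z j = z 0 + B * \sum_(j < m) B ^ j * z j.+1)%N.
  rewrite big_ord_recl expn0 mul1n big_distrr; congr (_ + _)%N.
  by apply: eq_bigr => i _; rewrite expnS /= mulnA.
rewrite !shift => sum_xy.
have xy0 : x 0 = y 0.
  have := congr1 (modn^~ B) sum_xy.
  by rewrite ![(_ + B * _)%N]addnC ![(B * _)%N]mulnC !modnMDl !modn_small ?ltxB ?ltyB.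
have B_gt0 : (0 < B)%N by apply: leq_ltn_trans (ltxB 0 _).
move: sum_xy; rewrite xy0 => /addnI/eqP; rewrite eqn_pmul2l // => /eqP sum_xy.
case: j lt_jm => // j lt_jm.
by apply: (IHm (fun i => x i.+1) (fun i => y i.+1)) => // i lt_im; [apply: ltxB | apply: ltyB].
Qed.

Lemma int_sum_expn_digits_inj (B m : nat) (x y : nat -> nat) :
  (forall j, j < m -> x j < B)%N -> (forall j, j < m -> y j < B)%N ->
  \sum_(j < m) (B ^ j)%:Z * ((x j)%:Z - (y j)%:Z) = 0 ->
  forall j, (j < m)%N -> x j = y j.
Proof.
move=> ltxB ltyB sum0; apply: (sum_expn_digits_inj ltxB ltyB); apply/eqP.
rewrite -eqz_nat -subr_eq0 -{}sum0 !(big_morph Posz PoszD (erefl 0%:Z)) -sumrB.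
by apply/eqP/eq_bigr => j _; rewrite !PoszM mulrBr.
Qed.

Lemma card_pred_gt0 (R : finNzRingType) : (0 < #|R|.-1)%N.
Proof. by rewrite -subn1 subn_gt0 card_finNzRing_gt1. Qed.

Lemma expf_card_pred (F : finFieldType) (x : F) : x != 0 -> x ^+ #|F|.-1 = 1.
Proof.
move=> nz_x; apply: (mulfI nz_x); rewrite mulr1 -exprS prednK ?expf_card //.
exact: ltnW (card_finNzRing_gt1 F).
Qed.

Lemma prim_root_exprS_surj (F : fieldType) (N : nat) (z x : F) :
  N.-primitive_root z -> x ^+ N = 1 -> exists2 j, (j < N)%N & x = z ^+ j.+1.
Proof.
move=> prim_z /(prim_rootP prim_z)[[[|j] lt_jN] /= ->]; last by exists j; first exact: ltnW.
have N_gt0 := prim_order_gt0 prim_z.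
by exists N.-1; rewrite ?prednK ?(prim_expr_order prim_z) ?expr0 // ltn_predL.
Qed.

Lemma prim_root_neq0 (R : idomainType) (N : nat) (z : R) : N.-primitive_root z -> z != 0.
Proof.
move=> prim_z; apply: contraPneq (prim_expr_order prim_z) => ->.
by rewrite expr0n gtn_eqF ?(prim_order_gt0 prim_z) // => /eqP; rewrite eq_sym oner_eq0.
Qed.

Section Words.
Variables (F : finFieldType) (n : nat).
Implicit Types (c : 'rV[F]_n) (b x : F).

Lemma cnt_le_n c b : (cnt c b <= n)%N.
Proof. by rewrite /cnt -[X in (_ <= X)%N]card_ord max_card. Qed.

Lemma wt_sum_cnt c : wt c = (\sum_(b : F | b != 0%R) cnt c b)%N.
Proof.
rewrite /wt /cnt -sum1_card.
rewrite (partition_big (fun l => c 0 l) (predC1 0)) => [|l]; last by rewrite inE.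
apply: eq_bigr => b nz_b; rewrite -sum1_card; apply: eq_bigl => l.
by rewrite !inE andb_idl // => /eqP ->.
Qed.

Lemma wt_eq0 c : (wt c == 0%N) = (c == 0).
Proof.
rewrite /wt cards_eq0; apply/eqP/eqP => [c0 | ->]; last by apply/setP => l; rewrite !inE mxE eqxx.
apply/rowP => l; rewrite mxE; apply/eqP/negPn/negP => nz_cl.
by have := in_set0 l; rewrite -c0 inE nz_cl.
Qed.

Lemma wtZ x c : x != 0 -> wt (x *: c) = wt c.
Proof. by move=> nz_x; apply: eq_card => l; rewrite !inE mxE mulf_eq0 negb_or nz_x. Qed.

Lemma cntZ x c b : x != 0 -> cnt (x *: c) b = cnt c (b / x).
Proof.
move=> nz_x; apply: eq_card => l; rewrite !inE mxE.
by apply/eqP/eqP => [<- | ->]; [rewrite mulrAC | rewrite mulrCA]; rewrite mulfV ?mul1r ?mulr1.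
Qed.

Definition punctured_line c := [set x *: c | x in [set~ (0 : F)]].

Lemma card_punctured_line c : c != 0 -> #|punctured_line c| = #|F|.-1.
Proof.
move=> nz_c; rewrite card_in_imset ?cardsC1 // => x y _ _ /eqP.
by rewrite -subr_eq0 -scalerBl scaler_eq0 (negbTE nz_c) orbF subr_eq0 => /eqP.
Qed.

End Words.

Section PrimitiveRoot.
Variables (F : finFieldType) (alpha : F).
Hypothesis prim_alpha : (#|F|.-1).-primitive_root alpha.

Lemma nz_prim_root_exprS b : b != 0 -> exists2 j, (j < #|F|.-1)%N & b = alpha ^+ j.+1.
Proof. by move=> nz_b; apply: prim_root_exprS_surj prim_alpha (expf_card_pred nz_b). Qed.

Lemma nz_prim_root_exprz_sub (i : int) b :
  b != 0 -> exists2 j, (j < #|F|.-1)%N & alpha ^ (i - j.+1%:Z) = b.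
Proof.
move=> nz_b; have nz_alpha := prim_root_neq0 prim_alpha.
have [|j lt_jN def_j] := nz_prim_root_exprS (b := alpha ^ i / b).
  by rewrite mulf_neq0 ?invr_eq0 ?expfz_neq0.
exists j => //; rewrite expfzDr // -exprnN -def_j invf_div mulrC divfK //.
by rewrite expfz_neq0.
Qed.

Lemma Vvec_inj_cnt n (c : 'rV[F]_n) :
  injective (Vvec alpha c) -> {in predC1 0 &, injective (cnt c)}.
Proof.
move=> injV b b' nz_b nz_b'.
have [j lt_jN ->] := nz_prim_root_exprS nz_b.
have [j' lt_j'N -> eq_cnt] := nz_prim_root_exprS nz_b'.
have lt_q (l : nat) : (l < #|F|.-1 -> l < #|F|)%N by move/leq_trans; apply; apply: leq_pred.
have := injV (Ordinal (lt_q _ lt_jN)) (Ordinal (lt_q _ lt_j'N)).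
by rewrite /Vvec /= lt_jN lt_j'N => /(_ eq_cnt) [->].
Qed.

End PrimitiveRoot.

Section MWS.
Variables (F : finFieldType) (n k : nat) (C : {vspace 'rV[F]_n}).
Hypotheses (dimC : \dim C = k) (MWS_C : MWS k C).

Let nzC := [pred c : 'rV[F]_n | (c \in C) && (c != 0)].
Let weights := undup [seq wt c | c <- enum nzC].

Definition wt_class w := [set c in C | (c != 0) && (wt c == w)].

Lemma card_nz_code : #|nzC| = (#|F| ^ k).-1.
Proof.
rewrite -dimC -card_vspace [#|C|](cardD1 0) mem0v add1n /=.
by apply: eq_card => c; rewrite !inE andbC.
Qed.

Lemma sum_card_wt_class : (\sum_(w <- weights) #|wt_class w|)%N = #|nzC|.
Proof.
apply/esym; rewrite cardE -sum1_size -(big_map (@wt F n) xpredT (fun=> 1%N)).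
rewrite -big_undup_iterop_count; apply: eq_bigr => w _.
rewrite Monoid.iteropE iter_addn_0 mul1n count_map.
rewrite -size_filter cardE; apply/perm_size/uniq_perm => [||c].
- exact/filter_uniq/enum_uniq.
- exact: enum_uniq.
by rewrite mem_filter !mem_enum !inE /= andbC -andbA.
Qed.

Lemma punctured_line_sub_wt_class c :
  c \in C -> c != 0 -> punctured_line c \subset wt_class (wt c).
Proof.
move=> Cc nz_c; apply/subsetP => y /imsetP[x]; rewrite !inE => nz_x ->.
by rewrite rpredZ //= scaler_eq0 negb_or nz_x nz_c /= wtZ.
Qed.

Lemma card_wt_class w : w \in weights -> #|wt_class w| = #|F|.-1.
Proof.
move: w; apply: sum_eq_size_mul_min => [w | ].
  rewrite mem_undup => /mapP[c]; rewrite mem_enum => /andP[Cc nz_c] ->.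
  by rewrite -(card_punctured_line nz_c) subset_leq_card ?punctured_line_sub_wt_class.
by rewrite sum_card_wt_class card_nz_code MWS_C !subn1 predn_exp mulKn ?card_pred_gt0 // mulnC.
Qed.

Lemma MWS_eq_wt_scalar a b :
  a \in C -> b \in C -> a != 0 -> wt b = wt a -> exists2 x, x != 0 & b = x *: a.
Proof.
move=> Ca Cb nz_a wt_ba.
have weights_a : wt a \in weights by rewrite mem_undup map_f // mem_enum inE Ca nz_a.
have line_a : punctured_line a = wt_class (wt a).
  apply/eqP; rewrite eqEcard punctured_line_sub_wt_class //.
  by rewrite card_wt_class // card_punctured_line // leqnn.
have : b \in wt_class (wt a) by rewrite inE Cb -wt_eq0 wt_ba wt_eq0 nz_a eqxx.
by rewrite -line_a => /imsetP[x]; rewrite !inE; exists x.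
Qed.

Variable alpha : F.
Hypothesis prim_alpha : (#|F|.-1).-primitive_root alpha.
Hypothesis injV : forall c : 'rV[F]_n, c \in C -> c != 0 -> injective (Vvec alpha c).

Lemma MWS_eq_cnt a b : a \in C -> b \in C -> {in predC1 0, cnt a =1 cnt b} -> a = b.
Proof.
move=> Ca Cb eq_ab.
have wt_ba : wt b = wt a by rewrite !wt_sum_cnt; apply: eq_bigr => x nz_x; rewrite eq_ab.
have [a0 | nz_a] := eqVneq a 0.
  by rewrite a0; apply/esym/eqP; rewrite -wt_eq0 wt_ba a0 wt_eq0.
have [x nz_x def_b] := MWS_eq_wt_scalar Ca Cb nz_a wt_ba.
have nz_alpha := prim_root_neq0 prim_alpha.
have cnt_alpha : cnt a (alpha / x) = cnt a alpha by rewrite -cntZ // -def_b eq_ab.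
have : alpha / x = alpha * 1.
  rewrite mulr1; apply: (Vvec_inj_cnt prim_alpha (injV Ca nz_a)) cnt_alpha => //.
  by rewrite inE mulf_neq0 ?invr_eq0.
by move/(mulfI nz_alpha)/eqP; rewrite invr_eq1 def_b => /eqP ->; rewrite scale1r.
Qed.

End MWS.

Theorem mainTheorem7 (F : finFieldType) (alpha : F)
  (halpha : (#|F|.-1).-primitive_root alpha)
  (n k : nat) (C : {vspace 'rV[F]_n})
  (hC : is_code k C) (hMWS : MWS k C)
  (hV : forall c : 'rV[F]_n, c \in C -> c != 0 -> injective (Vvec alpha c))
  (i : nat) (hi : (1 <= i <= #|F|.-1)%N) :
  exists r : 'I_(#|F|.-1) -> nat,
    (exists j, r j != 0%N) /\
    forall a b : 'rV[F]_n, a \in C -> b \in C -> a != b ->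
      \sum_(j < #|F|.-1)
         (r j)%:Z * ((cnt a (alpha ^ (i%:Z - (j.+1)%:Z)))%:Z
                     - (cnt b (alpha ^ (i%:Z - (j.+1)%:Z)))%:Z) != 0.
Proof.
exists (fun j => n.+1 ^ j)%N; split; first by exists (Ordinal (card_pred_gt0 F)); rewrite expn0.
move=> a b Ca Cb; apply: contra_neq => sum0.
have eq_cnt := int_sum_expn_digits_inj
  (x := fun j => cnt a (alpha ^ (i%:Z - j.+1%:Z)))
  (y := fun j => cnt b (alpha ^ (i%:Z - j.+1%:Z))) _ _ sum0.
apply: (MWS_eq_cnt hC.1 hMWS halpha hV Ca Cb) => x nz_x.
have [j lt_jN <-] := nz_prim_root_exprz_sub halpha i nz_x.
by apply: eq_cnt => // l _; rewrite ltnS cnt_le_n.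
Qed.
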